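(* Let $\mathcal{A}_I$ be an IOTS and $\mathcal{A}_S$ an LTS over the same action set $\mathit{Act}=L_I\sqcup L_O$. Then for every $M\in\mathbb{R}_{>0}$: $$\mathcal{A}_I\ \mathbf{ioco}\ \mathcal{A}_S \iff \chi^M(\mathcal{A}_I)\ \mathbf{tioco}_M\ \chi^M(\mathcal{A}_S).$$
   Context: An LTS is $\mathcal{A}=\langle S,\mathit{Act},\rightarrow,s_0\rangle$ with $S$ finite, $s_0\in S$, $\mathit{Act}=L_I\sqcup L_O$ finite, $\rightarrow\subseteq S\times\mathit{Act}\times S$ (no internal actions). An IOTS is an LTS in which every state has an outgoing transition on every input. A state is quiescent iff it has no outgoing output transition. Let $\delta$ be a fresh symbol, $\mathit{Act}^\delta=\mathit{Act}\cup\{\delta\}$. Define $s\ \mathbf{after}\ \varepsilon=\{s\}$; $s\ \mathbf{after}\ a=\{s' : a\in\mathit{Act},\ s\xrightarrow{a}s'\}\cup\{s : a=\delta,\ s\text{ quiescent}\}$; $s\ \mathbf{after}\ a\sigma=\bigcup\{s'\ \mathbf{after}\ \sigma : s'\in s\ \mathbf{after}\ a\}$; $\mathcal{A}\ \mathbf{after}\ \sigma=s_0\ \mathbf{after}\ \sigma$. $\mathbf{out}(s)=\{o\in L_O: s\xrightarrow{o}\}\cup\{\delta : s\text{ quiescent}\}$, extended to sets by union. $\mathit{Straces}(\mathcal{A})=\{\sigma\in(\mathit{Act}^\delta)^*:\mathcal{A}\ \mathbf{after}\ \sigma\neq\emptyset\}$. Then $\mathcal{A}_I\ \mathbf{ioco}\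 \mathcal{A}_S$ iff for all $\sigma\in\mathit{Straces}(\mathcal{A}_S)$: $\mathbf{out}(\mathcal{A}_I\ \mathbf{after}\ \sigma)\subseteq\mathbf{out}(\mathcal{A}_S\ \mathbf{after}\ \sigma)$. TA-ification: for $M>0$, $\chi^M(\mathcal{A})$ is the timed automaton with locations $S$, initial location $s_0$, labels $\mathit{Act}^\delta$ (inputs $L_I$, outputs $L_O$), single clock $c$, invariant $c\le M$ on every location, transitions $(\ell,a,c<M,\{c\},\ell')$ for each $(\ell,a,\ell')\in\rightarrow$ and $(\ell,\delta,c=M,\{c\},\ell)$ for each quiescent $\ell$. Every transition resets $c$, so $c=0$ upon entering a location; $\ell\xrightarrow{(d,a)}\ell'$ ($d\in\mathbb{R}_{\ge0}$) iff there is a transition $(\ell,a,\phi,\{c\},\ell')$ such that $c=d$ satisfies $\phi$ and the invariant of $\ell$. Timed notions for parameter $M$: a location $\ell$ is quiescent iff there are no $d<M$, $o\in L_O$ with $\ell\xrightarrow{(d,o)}$. $\mathbf{out}_M(\ell)=\{(d,o)\in\mathbb{R}_{\ge0}\times L_O:\ell\xrightarrow{(d,o)}\}\cup\{(M,\delta):\ell\text{ quiescent}\}$, extended to sets by union. $\ell\ \mathbf{after}_M\ \epsilon=\{\ell\}$, $\ell\ \mathbf{after}_M\ (d,a)=\{\ell':\ell\xrightarrow{(d,a)}\ell'\}\cup\{\ell:(d,a)=(M,\delta),\ \ell\text{ quiescent}\}$, $\ell\ \mathbf{after}_M\ (d,a)\rho=\bigcup\{\ell'\ \mathbf{after}_M\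 \rho:\ell'\in\ell\ \mathbf{after}_M\ (d,a)\}$; $\mathscr{A}\ \mathbf{after}_M\ \rho=\ell_0\ \mathbf{after}_M\ \rho$; $\mathit{Sttraces}_M(\mathscr{A})=\{\rho\in(\mathbb{R}_{\ge0}\times\mathit{Act}^\delta)^*:\mathscr{A}\ \mathbf{after}_M\ \rho\neq\emptyset\}$. An IOTA is a TA in which every location $\ell$ satisfies $\ell\xrightarrow{(d,i)}$ for all $i\in L_I$ and all $d<M$. For an IOTA $\mathscr{A}_I$ and TA $\mathscr{A}_S$: $\mathscr{A}_I\ \mathbf{tioco}_M\ \mathscr{A}_S$ iff for all $\rho\in\mathit{Sttraces}_M(\mathscr{A}_S)$: $\mathbf{out}_M(\mathscr{A}_I\ \mathbf{after}_M\ \rho)\subseteq\mathbf{out}_M(\mathscr{A}_S\ \mathbf{after}_M\ \rho)$. *)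

From mathcomp Require Import all_boot.
From Stdlib Require Import Reals.

Set Implicit Arguments.
Unset Strict Implicit.
Unset Printing Implicit Defensive.

(* Act = L_I ⊔ L_O is the disjoint sum LI + LO (inputs inl, outputs inr). *)
Record LTS (LI LO : finType) := {
  st : finType;
  s0 : st;
  trans : st -> (LI + LO)%type -> st -> bool
}.

Inductive dlab (LI LO : Type) := DAct of (LI + LO)%type | Delta.
Arguments Delta {LI LO}.

Section LTSdefs.
Variables (LI LO : finType) (A : LTS LI LO).

Definition IOTS : Prop := forall (s : st A) (i : LI), exists s', trans s (inl i) s'.

Definition quiescent (s : st A) : bool :=
  ~~ [exists o : LO, exists s' : st A, trans s (inr o) s'].

Definition step1 (s : st A) (a : dlab LI LO) (s' : st A) : Prop :=
  match a with
  | DAct b => trans s b s'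
  | Delta => s' = s /\ quiescent s
  end.

Fixpoint after (s : st A) (sigma : seq (dlab LI LO)) : st A -> Prop :=
  match sigma with
  | [::] => fun x => x = s
  | a :: sigma' => fun x => exists s', step1 s a s' /\ after s' sigma' x
  end.

Definition out (s : st A) (x : dlab LI LO) : Prop :=
  match x with
  | DAct (inr o) => exists s', trans s (inr o) s'
  | DAct (inl _) => False
  | Delta => quiescent s
  end.

Definition out_set (P : st A -> Prop) (x : dlab LI LO) : Prop :=
  exists s, P s /\ out s x.

Definition Straces (sigma : seq (dlab LI LO)) : Prop :=
  exists s, after (s0 A) sigma s.
End LTSdefs.

Definition ioco (LI LO : finType) (AI AS : LTS LI LO) : Prop :=
  forall sigma, Straces AS sigma ->
    forall x, out_set (after (s0 AI) sigma) x -> out_set (after (s0 AS) sigma) x.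

(* ---------- Single-clock timed automata in which every transition resets
   the clock c (so c = 0 on entering a location).  A transition
   (l, a, phi, {c}, l') is recorded by edge l a phi l'; guards phi and
   location invariants are predicates on the clock value. ---------- *)
Record TA (LI LO : finType) := {
  loc : finType;
  l0 : loc;
  edge : loc -> dlab LI LO -> (R -> Prop) -> loc -> Prop;
  inv : loc -> R -> Prop
}.

Section TAdefs.
Local Open Scope R_scope.
Variables (LI LO : finType) (M : R) (T : TA LI LO).

Definition tstep (l : loc T) (d : R) (a : dlab LI LO) (l' : loc T) : Prop :=
  0 <= d /\ exists phi, edge l a phi l' /\ phi d /\ inv l d.

Definition tquiescent (l : loc T) : Prop :=
  ~ (exists d (o : LO) l', d < M /\ tstep l d (DAct (inr o)) l').

Definition tout (l : loc T) (p : R * dlab LI LO) : Prop :=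
  (exists o : LO, p.2 = DAct (inr o) /\ exists l', tstep l p.1 p.2 l')
  \/ (p = (M, Delta) /\ tquiescent l).

Definition tout_set (P : loc T -> Prop) (p : R * dlab LI LO) : Prop :=
  exists l, P l /\ tout l p.

Definition tstep1 (l : loc T) (p : R * dlab LI LO) (l' : loc T) : Prop :=
  tstep l p.1 p.2 l' \/ (l' = l /\ p = (M, Delta) /\ tquiescent l).

Fixpoint tafter (l : loc T) (rho : seq (R * dlab LI LO)) : loc T -> Prop :=
  match rho with
  | [::] => fun x => x = l
  | p :: rho' => fun x => exists l', tstep1 l p l' /\ tafter l' rho' x
  end.

Definition Sttraces (rho : seq (R * dlab LI LO)) : Prop :=
  exists l, tafter (l0 T) rho l.

(* IOTA (for reference; tioco_M is intended for IOTA implementations) *)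
Definition IOTA : Prop :=
  forall (l : loc T) (i : LI) d, 0 <= d < M -> exists l', tstep l d (DAct (inl i)) l'.
End TAdefs.

Definition tioco (LI LO : finType) (M : R) (TI TS : TA LI LO) : Prop :=
  forall rho, Sttraces M TS rho ->
    forall p, tout_set M (tafter M (l0 TI) rho) p -> tout_set M (tafter M (l0 TS) rho) p.

Definition chi_edge (LI LO : finType) (M : R) (A : LTS LI LO)
    (l : st A) (a : dlab LI LO) (phi : R -> Prop) (l' : st A) : Prop :=
  (exists b, a = DAct b /\ trans l b l' /\ phi = (fun c => (c < M)%R))
  \/ (a = Delta /\ quiescent l /\ l' = l /\ phi = (fun c => c = M)).

Definition chi (LI LO : finType) (M : R) (A : LTS LI LO) : TA LI LO :=
  {| loc := st A; l0 := s0 A; edge := @chi_edge LI LO M A;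
     inv := fun _ c => (c <= M)%R |}.

(* The timed steps of chi^M are exactly the untimed steps of the LTS, taken at a
   delay below M for actions and at exactly M for delta.  Hence after_M and out_M
   on chi^M are after and out on the untimed trace, restricted to such admissible
   timings.  Forgetting the delays turns a tioco_M-test into an ioco-test, and
   timing every action at 0 and every delta at M turns an ioco-test into a
   tioco_M-test. *)
From mathcomp Require Import all_boot.
From Stdlib Require Import Reals Lra.
(* Imported after Reals, whose [R_sqrt.Delta] would otherwise shadow the
   constructor [Delta] in patterns. *)

Set Implicit Arguments.
Unset Strict Implicit.
Unset Printing Implicit Defensive.

Local Open Scope R_scope.

Section TAification.
Variables (LI LO : finType) (M : R) (A : LTS LI LO).
Hypothesis M_gt0 : 0 < M.

Definition admissible (p : R * dlab LI LO) : Prop :=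
  match p.2 with DAct _ => 0 <= p.1 < M | Delta => p.1 = M end.

Definition untime (rho : seq (R * dlab LI LO)) : seq (dlab LI LO) := map snd rho.

Definition canonical_delay (a : dlab LI LO) : R :=
  match a with DAct _ => 0 | Delta => M end.

Definition canonical_timing (sigma : seq (dlab LI LO)) : seq (R * dlab LI LO) :=
  map (fun a => (canonical_delay a, a)) sigma.

Lemma admissible_canonical_delay a : admissible (canonical_delay a, a).
Proof. by rewrite /admissible; case: a => /= *; lra. Qed.

Lemma admissible_canonical_timing sigma :
  List.Forall admissible (canonical_timing sigma).
Proof.
by elim: sigma => [|a sigma IH] /=; constructor => //; apply: admissible_canonical_delay.
Qed.

Lemma untime_canonical_timing sigma : untime (canonical_timing sigma) = sigma.
Proof. by rewrite /untime /canonical_timing -map_comp map_id. Qed.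

Lemma tstep_chiE (l : st A) d a l' :
  tstep (T := chi M A) l d a l' <->
  match a with
  | DAct b => 0 <= d < M /\ trans l b l'
  | Delta => d = M /\ l' = l /\ quiescent l
  end.
Proof.
rewrite /tstep /= /chi_edge; split.
- by move=> [d_ge0 [phi [[[b [-> [tr ->]]] | [-> [q [-> ->]]]] [phi_d _]]]].
- case: a => [b [d_lt tr] | [-> [-> q]]]; (split; first lra).
  + by exists (fun c => c < M); split; [left; exists b | split; lra].
  + by exists (fun c => c = M); split; [right | split; [|lra]].
Qed.

Lemma tquiescent_chiE (l : st A) : tquiescent M (T := chi M A) l <-> quiescent l.
Proof.
rewrite /tquiescent /quiescent; split.
- move=> noout; apply/negP => /existsP [o /existsP [l' tr]].
  by apply: noout; exists 0, o, l'; split => //; apply/tstep_chiE; split; first lra.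
- move=> /negP q [d [o [l' [_ /tstep_chiE [_ tr]]]]].
  by apply: q; apply/existsP; exists o; apply/existsP; exists l'.
Qed.

Lemma tstep1_chiE (l : st A) p l' :
  tstep1 M (T := chi M A) l p l' <-> admissible p /\ step1 l p.2 l'.
Proof.
case: p => d a; rewrite /tstep1 /admissible /= tstep_chiE tquiescent_chiE.
case: a => [b|] /=; split.
- by case=> [// | [_ []]].
- by left.
- by case=> [[-> [-> q]] | [-> [[->] q]]].
- by move=> [-> [-> q]]; left.
Qed.

Lemma tafter_chiE rho (l l' : st A) :
  tafter M (T := chi M A) l rho l' <->
  List.Forall admissible rho /\ after l (untime rho) l'.
Proof.
elim: rho l => [|p rho IH] l /=.
- by split=> [-> | [_ ->]]; first split; first constructor.
- split.
  + move=> [s [/tstep1_chiE [adm_p st1] /IH [adm_rho aft]]].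
    by split; [constructor | exists s].
  + move=> [/List.Forall_cons_iff [adm_p adm_rho] [s [st1 aft]]].
    by exists s; split; [apply/tstep1_chiE | apply/IH].
Qed.

Lemma tout_chiE (l : st A) p :
  tout M (T := chi M A) l p <-> admissible p /\ out l p.2.
Proof.
case: p => d a; rewrite /tout /admissible /= tquiescent_chiE; split.
- case=> [[o [-> [l' /tstep_chiE [d_lt tr]]]] | [[-> ->] q]] //.
  by split; last exists l'.
- case: a => [[i|o]|] /= [adm o_out] //.
  + by case: o_out => l' tr; left; exists o; split=> //; exists l'; apply/tstep_chiE.
  + by rewrite adm; right.
Qed.

Lemma Sttraces_chiE rho :
  Sttraces M (chi M A) rho <-> List.Forall admissible rho /\ Straces A (untime rho).
Proof.
split=> [[l /tafter_chiE [adm aft]] | [adm [l aft]]]; first by split; last exists l.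
by exists l; apply/tafter_chiE.
Qed.

Lemma tout_after_chiE rho p :
  tout_set M (tafter M (l0 (chi M A)) rho) p <->
  List.Forall admissible rho /\ admissible p /\ out_set (after (s0 A) (untime rho)) p.2.
Proof.
split.
- by move=> [l [/tafter_chiE [adm aft] /tout_chiE [adm_p o]]]; do 2 split=> //; exists l.
- move=> [adm [adm_p [l [aft o]]]].
  by exists l; split; [apply/tafter_chiE | apply/tout_chiE].
Qed.

End TAification.

Theorem theorem1 (LI LO : finType) (AI AS : LTS LI LO) (M : R) :
  IOTS AI -> (0 < M)%R ->
  (ioco AI AS <-> tioco M (chi M AI) (chi M AS)).
Proof.
move=> _ M_gt0; split.
- move=> io rho /(Sttraces_chiE _ M_gt0) [adm tr] p /(tout_after_chiE _ M_gt0) [_ [adm_p o]].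
  by apply/(tout_after_chiE _ M_gt0); do 2 split=> //; apply: io.
- move=> tio sigma tr x o.
  pose rho := canonical_timing M sigma.
  have adm : List.Forall (admissible M) rho := admissible_canonical_timing M_gt0 sigma.
  have trS : Sttraces M (chi M AS) rho.
    by apply/(Sttraces_chiE _ M_gt0); rewrite untime_canonical_timing.
  have outI : tout_set M (tafter M (l0 (chi M AI)) rho) (canonical_delay M x, x).
    apply/(tout_after_chiE _ M_gt0); rewrite untime_canonical_timing.
    by do 2 split=> //; apply: admissible_canonical_delay.
  have /(tout_after_chiE _ M_gt0) [_ [_]] := tio rho trS _ outI.
  by rewrite untime_canonical_timing.
Qed.
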